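(* In the setting of the context, $C=Ae_2A$ and $C\cong A\otimes_kA$ as rings, where $A\otimes_kA$ carries the multiplication $(a_1\otimes a_2)(a_3\otimes a_4)=a_1E_M(a_2a_3)\otimes a_4$. Also $C=Be_1B$ and $C\cong B\otimes_kB$ as rings, where $B\otimes_kB$ carries the multiplication $(b_1\otimes b_2)(b_3\otimes b_4)=b_1E_{M_1}(b_2b_3)\otimes b_4$.
   Context: $k$ is a field; $C_R(S)=\{r\in R:rs=sr\ \forall s\in S\}$. $N\subseteq M$ is a strongly separable, irreducible extension of $k$-algebras: $C_M(N)=k1$ and there are an $N$-bimodule map $E:M\to N$ and $x_1,\dots,x_n,y_1,\dots,y_n\in M$ with $\sum_iE(mx_i)y_i=m=\sum_ix_iE(y_im)$ for all $m\in M$, $E(1)\neq0$, $\sum_ix_iy_i\neq0$; normalized so that $E(1)=1$, whence $\sum_ix_iy_i=\lambda^{-1}1$ with $0\neq\lambda\in k$. Basic construction: given $S\subseteq R$, an $S$-bimodule map $E_S:R\to S$ with $E_S(1)=1$ and $r_i,s_i\in R$ with $\sum_iE_S(rr_i)s_i=r=\sum_ir_iE_S(s_ir)$ and $\sum_ir_is_i=\lambda^{-1}1$, set $R_1=R\otimes_SR$ with product $(a\otimes b)(c\otimes d)=aE_S(bc)\otimes d$, unit $\sum_ir_i\otimes s_i$, $R\subseteq R_1$ via $r\mapsto\sum_irr_i\otimes s_i$, Jones idempotent $e=1\otimes1$, $E_R:R_1\to R$, $a\otimes b\mapsto\lambda ab$; then $E_R$, $\lambda^{-1}r_i\otimes1$,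 $1\otimes s_i$ satisfy the same conditions with the same $\lambda$. From $(N\subseteq M,E)$ get $M_1,e_1,E_M$; from $(M\subseteq M_1,E_M)$ get $M_2,e_2,E_{M_1}$. Let $A=C_{M_1}(N)$, $B=C_{M_2}(M)$, $C=C_{M_2}(N)$. Depth 2 is assumed: $M_1$ is free as right $M$-module with basis in $A$, $M_2$ free as right $M_1$-module with basis in $B$. For $a,a'\in A$, $E_M(aa')\in C_M(N)=k1$ and for $b,b'\in B$, $E_{M_1}(bb')\in C_{M_1}(M)=k1$; these are identified with scalars. *)

From HB Require Import structures.
From mathcomp Require Import all_boot all_order all_algebra.
Set Implicit Arguments. Unset Strict Implicit. Unset Printing Implicit Defensive.
Import GRing.Theory.
Local Open Scope ring_scope.

(* Prop-valued subsets are used throughout (rings here may be infinite). *)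

Definition is_subalgebra (k : fieldType) (R : algType k) (S : R -> Prop) :=
  [/\ S 1, (forall a b, S a -> S b -> S (a + b)),
      (forall a b, S a -> S b -> S (a * b)) & (forall (c : k) a, S a -> S (c *: a))].

Definition centralizer (R : pzRingType) (S : R -> Prop) : R -> Prop :=
  fun r => forall s, S s -> r * s = s * r.

Definition bilin_on (k : fieldType) (X : algType k) (W : lmodType k)
  (P : X -> Prop) (f : X -> X -> W) :=
  forall (c : k) a a' b, P a -> P a' -> P b ->
    f (c *: a + a') b = c *: f a b + f a' b /\
    f b (c *: a + a') = c *: f b a + f b a'.

Definition balanced_on (k : fieldType) (X : algType k) (W : lmodType k)
  (P S : X -> Prop) (f : X -> X -> W) :=
  forall s a b, S s -> P a -> P b -> P (a * s) -> P (s * b) -> f (a * s) b = f a (s * b).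

(* (T, tau) is the tensor product P (x)_S P of the subspace P of X with itself
   over S (characterised by its universal property among k-vector spaces);
   take P := everything for R (x)_S R, and S := nothing for P (x)_k P. *)
Definition is_tensor (k : fieldType) (X : algType k) (P S : X -> Prop)
  (T : lmodType k) (tau : X -> X -> T) :=
  [/\ bilin_on P tau, balanced_on P S tau,
      (forall (W : lmodType k) (f : X -> X -> W), bilin_on P f -> balanced_on P S f ->
         exists g : {linear T -> W}, forall a b, P a -> P b -> g (tau a b) = f a b)
    & (forall (W : lmodType k) (g1 g2 : {linear T -> W}),
         (forall a b, P a -> P b -> g1 (tau a b) = g2 (tau a b)) -> g1 =1 g2)].

From HB Require Import structures.
From mathcomp Require Import all_boot all_order all_algebra.
From Stdlib Require Import ClassicalEpsilon.
Import GRing.Theory.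
Local Open Scope ring_scope.
Set Implicit Arguments. Unset Strict Implicit. Unset Printing Implicit Defensive.

(* The depth-2 basis (a_j) of M1 over M lies in A = C_M1(N), so M2 is the direct sum of the
   a_j (x) M1, and an element of M2 centralizes N iff all its components lie in A.  Hence
   C = A e2 A, and since the a_j (x) a_l are k-free, C = A (x)_k A with the product of the
   basic construction.  The maps
     l a = lam^-1 sum_i x_i a e2 e1 y_i   and   r a = lam^-1 sum_i x_i e1 e2 a y_i
   send A onto B (inverted on B by b |-> lam^-1 E_M1(b e1 e2) and b |-> lam^-1 E_M1(e2 e1 b))
   and satisfy (l a) e1 (r a') = lam^-1 a e2 a', which transports the description of C to
   C = B e1 B = B (x)_k B.  The product formula comes from e1 b e1 = E_M1(b) e1 on B, which
   rests on irreducibility: for a in A, e1 a and a e1 are the same scalar multiple of e1. *)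

Section LinearMaps.
Variables (k : fieldType) (U V W : lmodType k).

(* The identity wrapper gives HB a head symbol on which to declare the instance. *)
Definition linmap_fun (f : U -> V) (lf : linear f) : U -> V := f.
HB.instance Definition _ (f : U -> V) (lf : linear f) :=
  GRing.isLinear.Build k U V *:%R (linmap_fun lf) lf.
Definition linmap (f : U -> V) (lf : linear f) : {linear U -> V} := linmap_fun lf.

Lemma lfun_is_linear (f : {linear U -> V}) : linear f.
Proof. exact: linearP. Qed.

Variables (f : U -> V) (lf : linear f).

Lemma lin_sum m (F : 'I_m -> U) : f (\sum_i F i) = \sum_i f (F i).
Proof. exact: (raddf_sum (linmap lf)). Qed.
Lemma lin0 : f 0 = 0. Proof. exact: (raddf0 (linmap lf)). Qed.
Lemma linB a b : f (a - b) = f a - f b. Proof. exact: (raddfB (linmap lf)). Qed.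
Lemma linZ c a : f (c *: a) = c *: f a. Proof. exact: (linearZ_LR (linmap lf)). Qed.

Lemma linear_comp (g : V -> W) : linear g -> linear (fun u => g (f u)).
Proof. by move=> lg c a b; rewrite lf lg. Qed.

Lemma linear_scale (d : k) : linear (fun v : V => d *: v).
Proof. by move=> c a b; rewrite scalerDr !scalerA mulrC. Qed.

Lemma linear_sum_fun m (F : 'I_m -> U -> V) :
  (forall i, linear (F i)) -> linear (fun u => \sum_i F i u).
Proof.
by move=> h c a b; rewrite scaler_sumr -big_split; apply: eq_bigr => i _; apply: h.
Qed.
End LinearMaps.

Lemma linear_mull (k : fieldType) (R : algType k) (z : R) : linear (fun w : R => z * w).
Proof. by move=> c a b; rewrite mulrDr scalerAr. Qed.
Lemma linear_mulr (k : fieldType) (R : algType k) (z : R) : linear (fun w : R => w * z).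
Proof. by move=> c a b; rewrite mulrDl scalerAl. Qed.

Lemma scaler_injr (k : fieldType) (V : lmodType k) (v : V) (c d : k) :
  v != 0 -> c *: v = d *: v -> c = d.
Proof.
move=> v0 /eqP; rewrite -subr_eq0 -scalerBl scaler_eq0 (negbTE v0) orbF subr_eq0.
by move/eqP.
Qed.

(** * Tensor products given by their universal property *)

Section Tensor.
Variables (k : fieldType) (X : algType k) (P S : X -> Prop).
Variables (T : lmodType k) (tau : X -> X -> T).
Hypothesis tensorP : is_tensor P S tau.

Lemma tensor_ext (W : lmodType k) (f g : T -> W) : linear f -> linear g ->
  (forall a b, P a -> P b -> f (tau a b) = g (tau a b)) -> f =1 g.
Proof. by case: tensorP => _ _ _ uniq lf lg; apply: (uniq W (linmap lf) (linmap lg)). Qed.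

Lemma tensor_lift (W : lmodType k) (f : X -> X -> W) : bilin_on P f -> balanced_on P S f ->
  exists g : {linear T -> W}, forall a b, P a -> P b -> g (tau a b) = f a b.
Proof. by case: tensorP => _ _ lift _; apply: lift. Qed.

Lemma tensor_balanced u a b : S u -> P a -> P b -> P (a * u) -> P (u * b) ->
  tau (a * u) b = tau a (u * b).
Proof. by case: tensorP => _ bal _ _; apply: bal. Qed.

Lemma tensor_linl c a a' b : P a -> P a' -> P b -> tau (c *: a + a') b = c *: tau a b + tau a' b.
Proof. by case: tensorP => bil _ _ _ Pa Pa' Pb; case: (bil c a a' b Pa Pa' Pb). Qed.

Lemma tensor_linr c a a' b : P a -> P a' -> P b -> tau b (c *: a + a') = c *: tau b a + tau b a'.
Proof. by case: tensorP => bil _ _ _ Pa Pa' Pb; case: (bil c a a' b Pa Pa' Pb). Qed.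

Hypotheses (P0 : P 0) (P_lin : forall c a a', P a -> P a' -> P (c *: a + a')).

Lemma P_comb m (c : 'I_m -> k) (u : 'I_m -> X) : (forall i, P (u i)) -> P (\sum_i c i *: u i).
Proof.
move=> Pu; elim/big_ind: _ => // [a b Pa Pb | i _].
  by have := P_lin 1 Pa Pb; rewrite scale1r.
by have := P_lin (c i) (Pu i) P0; rewrite addr0.
Qed.

Lemma tensor0l b : P b -> tau 0 b = 0.
Proof.
move=> Pb; have := tensor_linl 1 P0 P0 Pb; rewrite !scale1r addr0 => h.
by apply: (addrI (tau 0 b)); rewrite addr0 -h.
Qed.

Lemma tensor0r b : P b -> tau b 0 = 0.
Proof.
move=> Pb; have := tensor_linr 1 P0 P0 Pb; rewrite !scale1r addr0 => h.
by apply: (addrI (tau b 0)); rewrite addr0 -h.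
Qed.

Lemma tensor_combl m (c : 'I_m -> k) (u : 'I_m -> X) b : (forall i, P (u i)) -> P b ->
  tau (\sum_i c i *: u i) b = \sum_i c i *: tau (u i) b.
Proof.
move=> Pu Pb; elim: m c u Pu => [|m IH] c u Pu; first by rewrite !big_ord0 tensor0l.
rewrite !big_ord_recr /= addrC tensor_linl ?Pu //; last by apply: P_comb.
by rewrite (IH (fun i => c (widen_ord _ i)) (fun i => u (widen_ord _ i))) // addrC.
Qed.

Lemma tensor_combr m (c : 'I_m -> k) (u : 'I_m -> X) b : (forall i, P (u i)) -> P b ->
  tau b (\sum_i c i *: u i) = \sum_i c i *: tau b (u i).
Proof.
move=> Pu Pb; elim: m c u Pu => [|m IH] c u Pu; first by rewrite !big_ord0 tensor0r.
rewrite !big_ord_recr /= addrC tensor_linr ?Pu //; last by apply: P_comb.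
by rewrite (IH (fun i => c (widen_ord _ i)) (fun i => u (widen_ord _ i))) // addrC.
Qed.
End Tensor.

Definition coordinate_family (k : fieldType) (X : algType k) (P : X -> Prop) p
    (u : 'I_p -> X) (K : 'I_p -> X -> k) :=
  [/\ forall j, P (u j),
      forall j c a a', P a -> P a' -> K j (c *: a + a') = c * K j a + K j a'
    & forall a, P a -> a = \sum_j K j a *: u j].

Section TensorOverField.
Variables (k : fieldType) (X : algType k) (P : X -> Prop).
Variables (T : lmodType k) (tau : X -> X -> T).
Hypothesis tensorP : is_tensor P (fun _ => False) tau.
Hypotheses (P0 : P 0) (P_lin : forall c a a', P a -> P a' -> P (c *: a + a')).
Variables (p : nat) (u u' : 'I_p -> X) (K K' : 'I_p -> X -> k).
Hypotheses (coordK : coordinate_family P u K) (coordK' : coordinate_family P u' K').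

Lemma tensor_coord_span t :
  exists D : 'I_p -> 'I_p -> k, t = \sum_j \sum_l D j l *: tau (u j) (u' l).
Proof.
case: coordK coordK' => Pu linK decK [Pu' linK' decK'].
have Gex j l : exists g : {linear T -> k^o},
    forall a b, P a -> P b -> g (tau a b) = (K j a * K' l b : k^o).
  apply: (tensor_lift tensorP) => [c a a' b Pa Pa' Pb|//]; split.
    by rewrite linK // mulrDl -mulrA.
  by rewrite linK' // mulrDr mulrCA.
have [G GE] := fin_all_exists (fun j => fin_all_exists (Gex j)).
exists (fun j l => G j l t); move: t; apply: (tensor_ext tensorP) => //.
  apply: linear_sum_fun => j; apply: linear_sum_fun => l c v w.
  by rewrite linearP scalerDl scalerA.
move=> a b Pa Pb; rewrite [in LHS](decK _ Pa) [in LHS](decK' _ Pb).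
rewrite (tensor_combl tensorP) //; last exact: P_comb.
apply: eq_bigr => j _; rewrite (tensor_combr tensorP) // scaler_sumr.
by apply: eq_bigr => l _; rewrite GE // scalerA.
Qed.

Lemma tensor_lift_injective (V : lmodType k) (phi : {linear T -> V}) (F : 'I_p -> 'I_p -> V) :
  (forall j l, phi (tau (u j) (u' l)) = F j l) ->
  (forall D : 'I_p -> 'I_p -> k, \sum_j \sum_l D j l *: F j l = 0 -> forall j l, D j l = 0) ->
  injective phi.
Proof.
move=> phiE freeF t t' /eqP; rewrite -subr_eq0 -linearB => /eqP phi0.
apply/eqP; rewrite -subr_eq0; apply/eqP.
have [D tD] := tensor_coord_span (t - t'); rewrite tD in phi0 *.
have D0 : forall j l, D j l = 0.
  apply: freeF; rewrite -[RHS]phi0 [in RHS]linear_sum; apply: eq_bigr => j _.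
  by rewrite linear_sum; apply: eq_bigr => l _; rewrite linearZ phiE.
by rewrite big1 // => j _; rewrite big1 // => l _; rewrite D0 scale0r.
Qed.
End TensorOverField.

(** * The basic construction *)

Record normalized_quasi_basis (k : fieldType) (R : algType k) (n : nat) (S : R -> Prop)
    (ES : R -> R) (r s : 'I_n -> R) (lam : k) : Prop := NormalizedQuasiBasis {
  qb_range : forall m, S (ES m);
  qb_unital : ES 1 = 1;
  qb_basisl : forall m, \sum_i ES (m * r i) * s i = m;
  qb_basisr : forall m, \sum_i r i * ES (s i * m) = m;
  qb_index_neq0 : lam != 0;
  qb_index : \sum_i r i * s i = lam^-1%:A }.

Record basic_construction (k : fieldType) (R R1 : algType k) (n : nat) (S : R -> Prop)
    (ES : R -> R) (r s : 'I_n -> R) (lam : k) (t : R -> R -> R1)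
    (ER : {linear R1 -> R}) : Prop := BasicConstruction {
  bc_quasi_basis : normalized_quasi_basis S ES r s lam;
  bc_tensor : is_tensor (fun _ => True) S t;
  bc_mul : forall a b c d, t a b * t c d = t (a * ES (b * c)) d;
  bc_unit : 1 = \sum_i t (r i) (s i);
  bc_expectation : forall a b, ER (t a b) = lam *: (a * b) }.

Section NormalizedQuasiBasis.
Variables (k : fieldType) (R : algType k) (n : nat) (S : R -> Prop) (ES : R -> R).
Variables (r s : 'I_n -> R) (lam : k).
Hypothesis qbP : normalized_quasi_basis S ES r s lam.

Lemma sum_ES_r_s : \sum_i ES (r i) * s i = 1.
Proof. by rewrite -[RHS](qb_basisl qbP); apply: eq_bigr => i _; rewrite mul1r. Qed.

Lemma sum_r_ES_s : \sum_i r i * ES (s i) = 1.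
Proof. by rewrite -[RHS](qb_basisr qbP); apply: eq_bigr => i _; rewrite mulr1. Qed.
End NormalizedQuasiBasis.

Section BasicConstruction.
Variables (k : fieldType) (R R1 : algType k) (n : nat) (S : R -> Prop) (ES : R -> R).
Variables (r s : 'I_n -> R) (lam : k) (t : R -> R -> R1) (ER : {linear R1 -> R}).
Hypothesis BC : basic_construction S ES r s lam t ER.

Definition incl (m : R) : R1 := \sum_(i < n) t (m * r i) (s i).
Definition jones : R1 := t 1 1.
Definition next_x (i : 'I_n) : R1 := lam^-1 *: t (r i) 1.
Definition next_y (i : 'I_n) : R1 := t 1 (s i).

Let qbP : normalized_quasi_basis S ES r s lam := bc_quasi_basis BC.
Let lam_neq0 : lam != 0 := qb_index_neq0 qbP.
Let tmul : forall a b c d, t a b * t c d = t (a * ES (b * c)) d := bc_mul BC.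
Let ERt : forall a b, ER (t a b) = lam *: (a * b) := bc_expectation BC.

Lemma t_linearl b : linear (t ^~ b).
Proof. by move=> c a a'; apply: (tensor_linl (bc_tensor BC)). Qed.

Lemma t_linearr a : linear (t a).
Proof. by move=> c b b'; apply: (tensor_linr (bc_tensor BC)). Qed.

Lemma t_balanced a u b : S u -> t (a * u) b = t a (u * b).
Proof. by move=> Su; apply: (tensor_balanced (bc_tensor BC)). Qed.

Lemma t_balanced_ES a m b : t (a * ES m) b = t a (ES m * b).
Proof. exact/t_balanced/(qb_range qbP). Qed.

Lemma t_ext (W : lmodType k) (f g : R1 -> W) : linear f -> linear g ->
  (forall a b, f (t a b) = g (t a b)) -> f =1 g.
Proof. by move=> lf lg fg; apply: (tensor_ext (bc_tensor BC)) => // a b _ _; apply: fg. Qed.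

Lemma incl_linear : linear incl.
Proof.
apply: linear_sum_fun => i c a a'.
by rewrite mulrDl -scalerAl (t_linearl _).
Qed.

Lemma t_suml m (F : 'I_m -> R) b : t (\sum_i F i) b = \sum_i t (F i) b.
Proof. exact: (lin_sum (t_linearl b)). Qed.

Lemma t_sumr m (F : 'I_m -> R) a : t a (\sum_i F i) = \sum_i t a (F i).
Proof. exact: (lin_sum (t_linearr a)). Qed.

Lemma incl_mull m a b : incl m * t a b = t (m * a) b.
Proof.
rewrite /incl mulr_suml -[in RHS](qb_basisr qbP a) mulr_sumr t_suml.
by apply: eq_bigr => i _; rewrite tmul mulrA.
Qed.

Lemma incl_mulr m a b : t a b * incl m = t a (b * m).
Proof.
rewrite /incl mulr_sumr -[in RHS](qb_basisl qbP (b * m)) t_sumr.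
by apply: eq_bigr => i _; rewrite tmul t_balanced_ES mulrA.
Qed.

Lemma incl1 : incl 1 = 1.
Proof. by rewrite (bc_unit BC) /incl; apply: eq_bigr => i _; rewrite mul1r. Qed.

Lemma inclM m m' : incl (m * m') = incl m * incl m'.
Proof. by rewrite {2}/incl mulr_sumr; apply: eq_bigr => i _; rewrite incl_mull mulrA. Qed.

Lemma incl_alg c : incl c%:A = c%:A.
Proof. by rewrite (linZ incl_linear) incl1. Qed.

Lemma t_jones a b : t a b = incl a * jones * incl b.
Proof. by rewrite incl_mull incl_mulr mulr1 mul1r. Qed.

Lemma jones_incl_jones m : jones * incl m * jones = incl (ES m) * jones.
Proof. by rewrite incl_mulr tmul incl_mull !mul1r !mulr1. Qed.

Lemma jones_commute u : S u -> incl u * jones = jones * incl u.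
Proof. by move=> Su; rewrite incl_mull incl_mulr mulr1 mul1r -{1}[u]mul1r t_balanced // mulr1. Qed.

Lemma jones_idem : jones * jones = jones.
Proof. by rewrite tmul !mul1r (qb_unital qbP). Qed.

Lemma jones_neq0 : jones != 0.
Proof.
apply/negP => /eqP e0; have := @oner_neq0 R1.
by rewrite (bc_unit BC) big1 ?eqxx // => i _; rewrite t_jones e0 mulr0 mul0r.
Qed.

Lemma ER_inclL m z : ER (incl m * z) = m * ER z.
Proof.
move: z; apply: t_ext.
- exact (linear_comp (linear_mull (incl m)) (lfun_is_linear ER)).
- exact (linear_comp (lfun_is_linear ER) (linear_mull m)).
by move=> a b; rewrite incl_mull !ERt -scalerAr mulrA.
Qed.

Lemma ER_inclR m z : ER (z * incl m) = ER z * m.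
Proof.
move: z; apply: t_ext.
- exact (linear_comp (linear_mulr (incl m)) (lfun_is_linear ER)).
- exact (linear_comp (lfun_is_linear ER) (linear_mulr m)).
by move=> a b; rewrite incl_mulr !ERt -scalerAl mulrA.
Qed.

Lemma ER1 : ER 1 = 1.
Proof.
rewrite (bc_unit BC) linear_sum; under eq_bigr do rewrite ERt.
by rewrite -scaler_sumr (qb_index qbP) scalerA mulfV // scale1r.
Qed.

Lemma ER_jones : ER jones = lam%:A.
Proof. by rewrite ERt mulr1. Qed.

Lemma incl_ER_commute u a :
  a * incl u = incl u * a -> incl (ER a) * incl u = incl u * incl (ER a).
Proof. by move=> au; rewrite -!inclM -ER_inclR -ER_inclL au. Qed.

Lemma incl_ER_basisl z : \sum_i incl (ER (z * next_x i)) * next_y i = z.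
Proof.
move: z; apply: t_ext => //.
- apply: linear_sum_fun => i.
  exact (linear_comp (linear_comp (linear_comp (linear_mulr (next_x i)) (lfun_is_linear ER))
    incl_linear) (linear_mulr (next_y i))).
move=> a b; rewrite -[in RHS](qb_basisl qbP b) t_sumr.
apply: eq_bigr => i _.
rewrite /next_x /next_y -scalerAr tmul linearZ /= ERt scalerA mulVf //.
by rewrite scale1r mulr1 incl_mull mulr1 t_balanced_ES.
Qed.

Lemma incl_ER_basisr z : \sum_i next_x i * incl (ER (next_y i * z)) = z.
Proof.
move: z; apply: t_ext => //.
- apply: linear_sum_fun => i.
  exact (linear_comp (linear_comp (linear_comp (linear_mull (next_y i)) (lfun_is_linear ER))
    incl_linear) (linear_mull (next_x i))).
move=> a b; rewrite -[in RHS](qb_basisr qbP a) t_suml.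
apply: eq_bigr => i _.
rewrite /next_x /next_y tmul ERt (linZ incl_linear) -scalerAl -scalerAr.
rewrite scalerA mulVf // scale1r !mul1r incl_mulr mul1r t_balanced_ES //.
Qed.

Lemma sum_next_xy : \sum_i next_x i * next_y i = lam^-1%:A.
Proof.
transitivity (lam^-1 *: \sum_i t (r i) (s i)); last by rewrite -(bc_unit BC).
rewrite scaler_sumr; apply: eq_bigr => i _.
by rewrite /next_x /next_y -scalerAl tmul mulr1 (qb_unital qbP) mulr1.
Qed.

Lemma basic_construction_quasi_basis :
  normalized_quasi_basis (fun z => exists m, z = incl m) (fun z => incl (ER z)) next_x next_y lam.
Proof.
split.
- by move=> z; exists (ER z).
- by rewrite ER1 incl1.
- exact: incl_ER_basisl.
- exact: incl_ER_basisr.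
- exact: lam_neq0.
- exact: sum_next_xy.
Qed.

Lemma jones_mulr_pull z : z * jones = incl (lam^-1 *: ER (z * jones)) * jones.
Proof.
move: z; apply: t_ext.
- exact: linear_mulr.
- exact (linear_comp (linear_comp (linear_comp (linear_mulr jones) (lfun_is_linear ER))
    (linear_scale lam^-1)) (linear_comp incl_linear (linear_mulr jones))).
move=> a b; rewrite tmul ERt scalerA mulVf // scale1r.
by rewrite incl_mull !mulr1.
Qed.

Lemma jones_mull_pull z : jones * z = jones * incl (lam^-1 *: ER (jones * z)).
Proof.
move: z; apply: t_ext.
- exact: linear_mull.
- exact (linear_comp (linear_comp (linear_comp (linear_mull jones) (lfun_is_linear ER))
    (linear_scale lam^-1)) (linear_comp incl_linear (linear_mull jones))).
move=> a b; rewrite tmul ERt scalerA mulVf // scale1r.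
by rewrite incl_mulr !mul1r -{1}[ES a]mul1r t_balanced_ES.
Qed.

Lemma jones_centralizer :
  (forall m, centralizer S m -> exists c : k, m = c%:A) ->
  forall a, centralizer (fun z => exists2 m, S m & z = incl m) a ->
  exists c : k, jones * a = c *: jones /\ a * jones = c *: jones.
Proof.
move=> irr a Aa.
have aS u : S u -> a * incl u = incl u * a by move=> Su; apply: Aa; exists u.
have [c cE] : exists c : k, lam^-1 *: ER (jones * a) = c%:A.
  apply: irr => u Su; rewrite -scalerAl -scalerAr -ER_inclR -ER_inclL.
  by rewrite -mulrA aS // !mulrA jones_commute.
have [c' c'E] : exists c : k, lam^-1 *: ER (a * jones) = c%:A.
  apply: irr => u Su; rewrite -scalerAl -scalerAr -ER_inclR -ER_inclL.
  by rewrite -mulrA -jones_commute // !mulrA aS.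
have ja : jones * a = c *: jones by rewrite jones_mull_pull cE incl_alg mulr_algr.
have aj : a * jones = c' *: jones by rewrite jones_mulr_pull c'E incl_alg mulr_algl.
have cc' : c = c'.
  apply: (scaler_injr jones_neq0).
  by rewrite -[in LHS]jones_idem scalerAl -ja -mulrA aj -scalerAr jones_idem.
by exists c; rewrite ja aj cc'.
Qed.
End BasicConstruction.

Section Centralizer.
Variables (k : fieldType) (R : algType k) (P : R -> Prop).

Lemma centralizer0 : centralizer P 0.
Proof. by move=> u _; rewrite mul0r mulr0. Qed.

Lemma centralizer_lin c a b :
  centralizer P a -> centralizer P b -> centralizer P (c *: a + b).
Proof. by move=> Ca Cb u Pu; rewrite mulrDl mulrDr -scalerAl -scalerAr Ca // Cb. Qed.

Lemma centralizerZ c a : centralizer P a -> centralizer P (c *: a).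
Proof. by move=> Ca; rewrite -[_ *: _]addr0; apply: centralizer_lin centralizer0. Qed.

Lemma centralizerM a b : centralizer P a -> centralizer P b -> centralizer P (a * b).
Proof. by move=> Ca Cb u Pu; rewrite -mulrA Cb // !mulrA Ca. Qed.

Lemma centralizer_sum m (F : 'I_m -> R) :
  (forall i, centralizer P (F i)) -> centralizer P (\sum_i F i).
Proof. by move=> CF u Pu; rewrite mulr_suml mulr_sumr; apply: eq_bigr => i _; apply: CF. Qed.
End Centralizer.

Lemma coordinate_family_transport (k : fieldType) (X Y : algType k) (P : X -> Prop)
    (Q : Y -> Prop) p (u : 'I_p -> X) (K : 'I_p -> X -> k) (f : X -> Y) (g : Y -> X) :
  coordinate_family P u K -> linear f -> linear g ->
  (forall a, P a -> Q (f a)) -> (forall b, Q b -> P (g b)) -> (forall b, Q b -> b = f (g b)) ->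
  coordinate_family Q (fun j => f (u j)) (fun j b => K j (g b)).
Proof.
case=> Pu linK decK lf lg PQ QP gK; split.
- by move=> j; apply: PQ.
- by move=> j c b b' Qb Qb'; rewrite lg linK //; apply: QP.
move=> b Qb; rewrite {1}(gK b Qb) {1}(decK _ (QP b Qb)) (lin_sum lf).
by apply: eq_bigr => j _; rewrite (linZ lf).
Qed.

Lemma tensor_lift_centralizer (k : fieldType) (X R : algType k) (P : X -> Prop)
    (T : lmodType k) (tau : X -> X -> T) (Q : R -> Prop) (phi : {linear T -> R}) :
  is_tensor P (fun _ => False) tau ->
  (forall a b, P a -> P b -> centralizer Q (phi (tau a b))) -> forall t, centralizer Q (phi t).
Proof.
move=> tensorP Cphi t z Qz; move: t; apply: (tensor_ext tensorP).
- exact (linear_comp (lfun_is_linear phi) (linear_mulr z)).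
- exact (linear_comp (lfun_is_linear phi) (linear_mull z)).
by move=> a b Pa Pb; apply: Cphi.
Qed.

(* Junk value when [m] is not a scalar. *)
Definition alg_scalar (k : fieldType) (R : algType k) (m : R) : k :=
  epsilon (inhabits 0) (fun c => m = c%:A).

Lemma alg_scalarK (k : fieldType) (R : algType k) (c : k) : alg_scalar (c%:A : R) = c.
Proof.
apply: (fmorph_inj (in_alg R)); rewrite /= /alg_scalar.
by rewrite -(epsilon_spec (inhabits 0) (fun d => c%:A = d%:A :> R)) //; exists c.
Qed.

(** * The tower N, M, M1, M2 *)

Section Tower.
Variables (k : fieldType) (M M1 M2 : algType k) (N : M -> Prop) (E : M -> M) (n : nat).
Variables (x y : 'I_n -> M) (lam : k) (t1 : M -> M -> M1) (EM : {linear M1 -> M}).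
Variables (t2 : M1 -> M1 -> M2) (EM1 : {linear M2 -> M1}) (p : nat) (aa : 'I_p -> M1).

Local Notation i1 := (incl x y t1).
Local Notation r := (next_x x lam t1).
Local Notation s := (next_y y t1).
Local Notation i2 := (incl r s t2).
Local Notation e1 := (i2 (jones t1)).
Local Notation e2 := (jones t2).
Local Notation i12 m := (i2 (i1 m)).
Local Notation A := (centralizer (fun z => exists2 m, N m & z = i1 m)).
Local Notation B := (centralizer (fun z => exists m, z = i12 m)).
Local Notation C := (centralizer (fun z => exists2 m, N m & z = i12 m)).

Hypotheses (level1 : basic_construction N E x y lam t1 EM)
  (level2 : basic_construction (fun z => exists m, z = i1 m) (fun z => i1 (EM z)) r s lam t2 EM1)
  (irreducible : forall m, centralizer N m -> exists c : k, m = c%:A).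

Let E_range : forall m, N (E m) := qb_range (bc_quasi_basis level1).
Let lam_neq0 : lam != 0 := qb_index_neq0 (bc_quasi_basis level1).

Lemma i12M m m' : i12 (m * m') = i12 m * i12 m'.
Proof. by rewrite !(inclM level1, inclM level2). Qed.

Lemma i12_sum m (F : 'I_m -> M) : i12 (\sum_i F i) = \sum_i i12 (F i).
Proof. by rewrite (lin_sum (incl_linear level1)) (lin_sum (incl_linear level2)). Qed.

Lemma i12_1 : i12 1 = 1.
Proof. by rewrite (incl1 level1) (incl1 level2). Qed.

Lemma e2_commute m : i12 m * e2 = e2 * i12 m.
Proof. by apply: (jones_commute level2); exists m. Qed.

Lemma e1_idem : e1 * e1 = e1.
Proof. by rewrite -(inclM level2) (jones_idem level1). Qed.

Lemma e1_commute u : N u -> i12 u * e1 = e1 * i12 u.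
Proof. by move=> Nu; rewrite -!(inclM level2) (jones_commute level1). Qed.

Lemma e1_i12_e1 m : e1 * i12 m * e1 = i12 (E m) * e1.
Proof. by rewrite -!(inclM level2) (jones_incl_jones level1). Qed.

Lemma e2_e1_e2 : e2 * e1 * e2 = lam *: e2.
Proof.
rewrite (jones_incl_jones level2) (ER_jones level1) (incl_alg level1) (incl_alg level2).
by rewrite mulr_algl.
Qed.

Lemma e1_e2_e1 : e1 * e2 * e1 = lam *: e1.
Proof.
rewrite -(t_jones level2) scaler_sumr.
transitivity (t2 (jones t1) (\sum_i t1 (E (x i)) (y i))).
  congr t2; rewrite /jones -{2}(sum_ES_r_s (bc_quasi_basis level1)) (t_sumr level1).
  by apply: eq_bigr => i _; rewrite -(t_balanced_ES level1) mul1r.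
rewrite (t_sumr level2); apply: eq_bigr => i _.
rewrite /next_x -scalerAr (linZ (t_linearl level2 _)) scalerA mulfV // scale1r.
rewrite {2}/jones (bc_mul level1) !mul1r (t_jones level1 (E (x i)) 1) (incl1 level1) mulr1.
rewrite (jones_commute level1) // (t_balanced level2); last by exists (E (x i)).
by rewrite (incl_mull level1) mulr1.
Qed.

Lemma A_commute a u : A a -> N u -> i12 u * i2 a = i2 a * i12 u.
Proof. by move=> Aa Nu; rewrite -!(inclM level2) Aa //; exists u. Qed.

Definition average (G : M2) : M2 := \sum_(i < n) i12 (x i) * G * i12 (y i).

Lemma average_linear : linear average.
Proof.
apply: linear_sum_fun => i.
exact (linear_comp (linear_mull (i12 (x i))) (linear_mulr (i12 (y i)))).
Qed.

Lemma average_B G : (forall u, N u -> i12 u * G = G * i12 u) -> B (average G).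
Proof.
move=> GN.
have [Ga GaE] : exists Ga : {linear M1 -> M2},
    forall a b, True -> True -> Ga (t1 a b) = i12 a * G * i12 b.
  apply: (tensor_lift (bc_tensor level1)) => [c a a' b _ _ _|u a b Nu _ _ _ _].
    rewrite !(incl_linear level1, incl_linear level2) mulrDl mulrDr mulrDl -!scalerAl.
    by rewrite -scalerAr.
  by rewrite !i12M -(mulrA (i12 a)) GN // !mulrA.
have GaL m z : Ga (i1 m * z) = i12 m * Ga z.
  move: z; apply: (t_ext level1) => [||a b].
  - exact (linear_comp (linear_mull (i1 m)) (lfun_is_linear Ga)).
  - exact (linear_comp (lfun_is_linear Ga) (linear_mull (i12 m))).
  by rewrite (incl_mull level1) !GaE // i12M !mulrA.
have GaR m z : Ga (z * i1 m) = Ga z * i12 m.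
  move: z; apply: (t_ext level1) => [||a b].
  - exact (linear_comp (linear_mulr (i1 m)) (lfun_is_linear Ga)).
  - exact (linear_comp (lfun_is_linear Ga) (linear_mulr (i12 m))).
  by rewrite (incl_mulr level1) !GaE // i12M !mulrA.
have -> : average G = Ga 1.
  by rewrite (bc_unit level1) (lin_sum (lfun_is_linear Ga)); apply: eq_bigr => i _; rewrite GaE.
by move=> _ [m ->]; rewrite -GaR -GaL mul1r mulr1.
Qed.

Definition A_to_Bl (a : M1) : M2 := lam^-1 *: average (i2 a * e2 * e1).
Definition A_to_Br (a : M1) : M2 := lam^-1 *: average (e1 * e2 * i2 a).
Definition B_to_Al (b : M2) : M1 := lam^-1 *: EM1 (b * e1 * e2).
Definition B_to_Ar (b : M2) : M1 := lam^-1 *: EM1 (e2 * e1 * b).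

Lemma A_to_Bl_linear : linear A_to_Bl.
Proof.
exact (linear_comp (linear_comp (linear_comp (incl_linear level2) (linear_mulr e2))
  (linear_mulr e1)) (linear_comp average_linear (linear_scale lam^-1))).
Qed.

Lemma A_to_Br_linear : linear A_to_Br.
Proof.
exact (linear_comp (linear_comp (incl_linear level2) (linear_mull (e1 * e2)))
  (linear_comp average_linear (linear_scale lam^-1))).
Qed.

Lemma B_to_Al_linear : linear B_to_Al.
Proof.
exact (linear_comp (linear_comp (linear_mulr e1) (linear_mulr e2))
  (linear_comp (lfun_is_linear EM1) (linear_scale lam^-1))).
Qed.

Lemma B_to_Ar_linear : linear B_to_Ar.
Proof.
exact (linear_comp (linear_mull (e2 * e1))
  (linear_comp (lfun_is_linear EM1) (linear_scale lam^-1))).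
Qed.

Lemma A_to_Bl_B a : A a -> B (A_to_Bl a).
Proof.
move=> Aa; apply/centralizerZ/average_B => u Nu.
by apply: commrM; [apply: commrM; [apply: A_commute | apply: e2_commute] | apply: e1_commute].
Qed.

Lemma A_to_Br_B a : A a -> B (A_to_Br a).
Proof.
move=> Aa; apply/centralizerZ/average_B => u Nu.
by apply: commrM; [apply: commrM; [apply: e1_commute | apply: e2_commute] | apply: A_commute].
Qed.

Lemma A_to_Bl_e1 a : A a -> A_to_Bl a * e1 = lam^-1 *: (i2 a * e2 * e1).
Proof.
move=> Aa; rewrite /A_to_Bl -scalerAl /average mulr_suml; congr (_ *: _).
transitivity (\sum_i i12 (x i * E (y i)) * (i2 a * e2 * e1)); last first.
  by rewrite -mulr_suml -i12_sum (sum_r_ES_s (bc_quasi_basis level1)) i12_1 mul1r.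
apply: eq_bigr => i _.
rewrite -!mulrA [e1 * (i12 _ * e1)]mulrA e1_i12_e1 [e2 * (i12 _ * e1)]mulrA -e2_commute.
by rewrite -mulrA [i2 a * (i12 _ * _)]mulrA -A_commute // i12M !mulrA.
Qed.

Lemma e1_A_to_Br a : A a -> e1 * A_to_Br a = lam^-1 *: (e1 * e2 * i2 a).
Proof.
move=> Aa; rewrite /A_to_Br -scalerAr /average mulr_sumr; congr (_ *: _).
transitivity (\sum_i (e1 * e2 * i2 a) * i12 (E (x i) * y i)); last first.
  by rewrite -mulr_sumr -i12_sum (sum_ES_r_s (bc_quasi_basis level1)) i12_1 mulr1.
apply: eq_bigr => i _.
rewrite !mulrA e1_i12_e1 e1_commute // -!mulrA [i12 _ * (e2 * _)]mulrA e2_commute.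
by rewrite -mulrA [i12 _ * (i2 a * _)]mulrA A_commute // -!mulrA i12M.
Qed.

Lemma A_to_Bl_e1_Br a a' : A a -> A a' -> A_to_Bl a * e1 * A_to_Br a' = lam^-1 *: t2 a a'.
Proof.
move=> Aa Aa'; rewrite -e1_idem mulrA A_to_Bl_e1 // -mulrA e1_A_to_Br //.
rewrite -scalerAl -scalerAr scalerA (t_jones level2).
have -> : i2 a * e2 * e1 * (e1 * e2 * i2 a') = i2 a * (e2 * e1 * e2) * i2 a'.
  by rewrite -!mulrA; congr (_ * (_ * _)); rewrite mulrA e1_idem.
by rewrite e2_e1_e2 -scalerAr -scalerAl scalerA divfK.
Qed.

Lemma B_to_Al_A b : B b -> A (B_to_Al b).
Proof.
move=> Bb _ [u Nu ->]; rewrite /B_to_Al -scalerAl -scalerAr.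
rewrite -(ER_inclR level2) -(ER_inclL level2); congr (_ *: EM1 _); apply/esym.
apply: commrM; [apply: commrM|];
  [by apply/esym/Bb; exists u | exact: e1_commute | exact: e2_commute].
Qed.

Lemma B_to_Ar_A b : B b -> A (B_to_Ar b).
Proof.
move=> Bb _ [u Nu ->]; rewrite /B_to_Ar -scalerAl -scalerAr.
rewrite -(ER_inclR level2) -(ER_inclL level2); congr (_ *: EM1 _); apply/esym.
apply: commrM; [apply: commrM|];
  [exact: e2_commute | exact: e1_commute | by apply/esym/Bb; exists u].
Qed.

Lemma i2_next_x i : i2 (r i) = lam^-1 *: (i12 (x i) * e1).
Proof.
rewrite /next_x (linZ (incl_linear level2)) (t_jones level1) (incl1 level1) mulr1.
by rewrite (inclM level2).
Qed.

Lemma i2_next_y i : i2 (s i) = e1 * i12 (y i).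
Proof. by rewrite /next_y (t_jones level1) (incl1 level1) mul1r (inclM level2). Qed.

Lemma A_to_BlK b : B b -> A_to_Bl (B_to_Al b) = b.
Proof.
move=> Bb; rewrite -[RHS]mulr1 (bc_unit level2) mulr_sumr /A_to_Bl /average scaler_sumr.
apply: eq_bigr => i _; rewrite (t_jones level2) i2_next_x i2_next_y -!scalerAl -scalerAr.
congr (_ *: _); rewrite !mulrA (Bb (i12 (x i))); last by exists (x i).
rewrite -(mulrA (i12 (x i)) b) -(mulrA (i12 (x i)) (b * e1)) (jones_mulr_pull level2 (b * e1)).
by rewrite -/(B_to_Al b) !mulrA.
Qed.

Lemma A_to_BrK b : B b -> A_to_Br (B_to_Ar b) = b.
Proof.
move=> Bb; rewrite -[RHS]mul1r (bc_unit level2) mulr_suml /A_to_Br /average scaler_sumr.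
apply: eq_bigr => i _; rewrite (t_jones level2) i2_next_x i2_next_y -!scalerAl.
congr (_ *: _); rewrite -!mulrA -(Bb (i12 (y i))); last by exists (y i).
rewrite [e1 * (b * _)]mulrA [e2 * (e1 * b * _)]mulrA (jones_mull_pull level2 (e1 * b)).
by rewrite -/(B_to_Ar b) !mulrA.
Qed.

Lemma EM1_A_to_Bl a c : A a -> a * jones t1 = c *: jones t1 -> EM1 (A_to_Bl a) = c%:A.
Proof.
move=> Aa ac; rewrite /A_to_Bl linearZ /= /average linear_sum /=.
have -> : \sum_i EM1 (i12 (x i) * (i2 a * e2 * e1) * i12 (y i))
        = \sum_i lam *: (c *: t1 (x i) (y i)).
  apply: eq_bigr => i _; rewrite !mulrA -!(inclM level2) -mulrA -(inclM level2).
  rewrite -(t_jones level2) (bc_expectation level2) mulrA -(mulrA _ a) ac.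
  by rewrite -scalerAr -scalerAl -(t_jones level1).
rewrite scaler_sumr (bc_unit level1) scaler_sumr.
by apply: eq_bigr => i _; rewrite scalerA mulVf // scale1r.
Qed.

Lemma e1_B_e1 b : B b -> e1 * b * e1 = i2 (EM1 b) * e1.
Proof.
move=> Bb; have Aa := B_to_Al_A Bb; rewrite -(A_to_BlK Bb).
have [c [ca ac]] := jones_centralizer level1 irreducible Aa.
rewrite (EM1_A_to_Bl Aa ac) (incl_alg level2) mulr_algl -mulrA A_to_Bl_e1 //.
rewrite -scalerAr !mulrA -(inclM level2) ca (linZ (incl_linear level2)) -!scalerAl.
by rewrite e1_e2_e1 !scalerA mulrC mulrA mulfV // mul1r.
Qed.

Lemma A_incl_EM z : A z -> A (i1 (EM z)).
Proof. by move=> Az _ [u Nu ->]; apply: (incl_ER_commute level1); apply: Az; exists u. Qed.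

Lemma B_incl_EM1 b : B b -> B (i2 (EM1 b)).
Proof. by move=> Bb _ [m ->]; apply: (incl_ER_commute level2); apply: Bb; exists m. Qed.

Lemma C_t2 u v : A u -> A v -> C (t2 u v).
Proof.
move=> Au Av _ [m Nm ->]; rewrite (t_jones level2); apply/esym.
by apply: commrM; [apply: commrM|]; [exact: A_commute | exact: e2_commute | exact: A_commute].
Qed.

Lemma C_B_e1_B b b' : B b -> B b' -> C (b * e1 * b').
Proof.
move=> Bb Bb' _ [m Nm ->]; apply/esym.
apply: commrM; [apply: commrM|];
  [by apply/esym/Bb; exists m | exact: e1_commute | by apply/esym/Bb'; exists m].
Qed.

Hypotheses (aaA : forall j, A (aa j))
  (aa_span : forall z, exists mm : 'I_p -> M, z = \sum_(j < p) aa j * i1 (mm j))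
  (aa_free : forall mm : 'I_p -> M, \sum_(j < p) aa j * i1 (mm j) = 0 -> forall j, mm j = 0).

Definition coord (z : M1) : 'I_p -> M :=
  epsilon (inhabits (fun _ => 0)) (fun mm => z = \sum_(j < p) aa j * i1 (mm j)).

Lemma coordE z : z = \sum_(j < p) aa j * i1 (coord z j).
Proof. exact: (epsilon_spec _ _ (aa_span z)). Qed.

Lemma coord_unique z mm : z = \sum_(j < p) aa j * i1 (mm j) -> forall j, coord z j = mm j.
Proof.
move=> zE j; apply/eqP; rewrite -subr_eq0; apply/eqP.
move: j; apply: (@aa_free (fun i => coord z i - mm i)).
under eq_bigr do rewrite (linB (incl_linear level1)) mulrBr.
by rewrite sumrB -coordE -zE subrr.
Qed.

Lemma coord_lin j c z w : coord (c *: z + w) j = c *: coord z j + coord w j.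
Proof.
move: j; apply: (@coord_unique _ (fun j => c *: coord z j + coord w j)).
rewrite {1}(coordE z) {1}(coordE w) scaler_sumr -big_split.
by apply: eq_bigr => i _; rewrite (incl_linear level1) mulrDr scalerAr.
Qed.

Lemma coord_mulr z m j : coord (z * i1 m) j = coord z j * m.
Proof.
move: j; apply: (@coord_unique _ (fun j => coord z j * m)); rewrite {1}(coordE z) mulr_suml.
by apply: eq_bigr => i _; rewrite (inclM level1) mulrA.
Qed.

Lemma coord_mull z u j : N u -> coord (i1 u * z) j = u * coord z j.
Proof.
move=> Nu; move: j; apply: (@coord_unique _ (fun j => u * coord z j)).
rewrite {1}(coordE z) mulr_sumr.
by apply: eq_bigr => i _; rewrite (inclM level1) !mulrA -(aaA i) //; exists u.
Qed.

Lemma coord_aa l j : coord (aa l) j = (j == l)%:R.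
Proof.
move: j; apply: (@coord_unique _ (fun j => (j == l)%:R)).
rewrite (bigD1 l) //= eqxx (incl1 level1) mulr1 big1 ?addr0 //.
by move=> i /negbTE ->; rewrite (lin0 (incl_linear level1)) mulr0.
Qed.

Lemma t2_coord : exists G : 'I_p -> {linear M2 -> M1},
  forall j u v, G j (t2 u v) = i1 (coord u j) * v.
Proof.
have Gex j : exists G : {linear M2 -> M1}, forall u v, G (t2 u v) = i1 (coord u j) * v.
  have [G GE] : exists G : {linear M2 -> M1},
      forall u v, True -> True -> G (t2 u v) = i1 (coord u j) * v.
    apply: (tensor_lift (bc_tensor level2)) => [c u u' v _ _ _|_ u v [m ->] _ _ _ _].
      by rewrite coord_lin (incl_linear level1) mulrDl mulrDr -scalerAl -scalerAr.
    by rewrite coord_mulr (inclM level1) mulrA.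
  by exists G => u v; apply: GE.
have [G GE] := fin_all_exists Gex.
by exists G.
Qed.

Lemma M2_decomposition z : exists w : 'I_p -> M1, z = \sum_(j < p) t2 (aa j) (w j).
Proof.
have [G GE] := t2_coord; exists (fun j => G j z); move: z.
apply: (t_ext level2) => //.
  by apply: linear_sum_fun => j; exact (linear_comp (lfun_is_linear (G j)) (t_linearr level2 _)).
move=> u v; rewrite {1}(coordE u) (t_suml level2); apply: eq_bigr => j _.
by rewrite GE (t_balanced level2) //; exists (coord u j).
Qed.

Lemma M2_decomposition_unique w w' :
  \sum_(j < p) t2 (aa j) (w j) = \sum_(j < p) t2 (aa j) (w' j) -> w =1 w'.
Proof.
have [G GE] := t2_coord.
have Gsum l v : G l (\sum_(j < p) t2 (aa j) (v j)) = v l.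
  rewrite linear_sum (bigD1 l) //= GE coord_aa eqxx (incl1 level1) mul1r big1 ?addr0 //.
  by move=> j /negbTE jl; rewrite GE coord_aa eq_sym jl (lin0 (incl_linear level1)) mul0r.
by move=> ww' l; rewrite -Gsum ww' Gsum.
Qed.

Lemma C_decomposition c :
  C c -> exists w : 'I_p -> M1, (forall j, A (w j)) /\ c = \sum_(j < p) t2 (aa j) (w j).
Proof.
move=> Cc; have [w cE] := M2_decomposition c; exists w; split => // j _ [u Nu ->].
move: j; apply: (@M2_decomposition_unique (fun j => w j * i1 u) (fun j => i1 u * w j)).
transitivity (c * i12 u).
  by rewrite cE mulr_suml; apply: eq_bigr => i _; rewrite (incl_mulr level2).
rewrite Cc; last by exists u.
rewrite cE mulr_sumr; apply: eq_bigr => i _.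
rewrite (incl_mull level2) -(aaA i); last by exists u.
by rewrite (t_balanced level2) //; exists u.
Qed.

Lemma t2_aa_free (D : 'I_p -> 'I_p -> k) :
  \sum_j \sum_l D j l *: t2 (aa j) (aa l) = 0 -> forall j l, D j l = 0.
Proof.
move=> D0 j l.
have /(_ j) /= Dj : (fun j => \sum_l D j l *: aa l) =1 (fun _ => 0).
  apply: M2_decomposition_unique; rewrite [RHS]big1 => [|i _]; last first.
    exact: (lin0 (t_linearr level2 _)).
  rewrite -[RHS]D0; apply: eq_bigr => i _; rewrite (t_sumr level2).
  by apply: eq_bigr => m _; rewrite (linZ (t_linearr level2 _)).
have : \sum_m aa m * i1 (D j m)%:A = 0.
  by rewrite -[RHS]Dj; apply: eq_bigr => m _; rewrite (incl_alg level1) mulr_algr.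
by move/aa_free/(_ l)/eqP; rewrite scaler_eq0 oner_eq0 orbF => /eqP.
Qed.

Definition coeff (j : 'I_p) (z : M1) : k := alg_scalar (coord z j).

Lemma coordA z j : A z -> coord z j = (coeff j z)%:A.
Proof.
move=> Az; have [c cE] : exists c : k, coord z j = c%:A.
  by apply: irreducible => u Nu; rewrite -coord_mulr -coord_mull // Az //; exists u.
by rewrite /coeff cE alg_scalarK.
Qed.

Lemma A_coordinates : coordinate_family A aa coeff.
Proof.
split => // [j c z w Az Aw | z Az].
  by rewrite /coeff coord_lin (coordA j Az) (coordA j Aw) scalerA -scalerDl !alg_scalarK.
rewrite {1}(coordE z); apply: eq_bigr => j _.
by rewrite (coordA j Az) (incl_alg level1) mulr_algr.
Qed.

Lemma C_eq_A_e2_A c : C c <-> exists (q : nat) (u v : 'I_q -> M1),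
   (forall j, A (u j) /\ A (v j)) /\ c = \sum_(j < q) i2 (u j) * e2 * i2 (v j).
Proof.
split=> [/C_decomposition [w [Aw ->]] | [q [u [v [Auv ->]]]]].
  exists p, aa, w; split=> [j|]; first by split.
  by apply: eq_bigr => j _; rewrite (t_jones level2).
apply: centralizer_sum => j; rewrite -(t_jones level2).
by case: (Auv j); apply: C_t2.
Qed.

Lemma C_iso_A_tensor_A (T : lmodType k) (tau : M1 -> M1 -> T) :
  is_tensor A (fun _ => False) tau ->
  exists phi : {linear T -> M2},
    [/\ injective phi, (forall c, C c <-> exists t, c = phi t) &
        forall a1 a2 a3 a4, A a1 -> A a2 -> A a3 -> A a4 ->
          phi (tau a1 a2) * phi (tau a3 a4) = phi (tau (a1 * i1 (EM (a2 * a3))) a4)].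
Proof.
move=> tensorA.
have [phi phiE] : exists phi : {linear T -> M2},
    forall a b, A a -> A b -> phi (tau a b) = t2 a b.
  apply: (tensor_lift tensorA) => // c a a' b _ _ _.
  by split; [apply: (t_linearl level2) | apply: (t_linearr level2)].
exists phi; split.
- apply: (tensor_lift_injective tensorA (@centralizer0 _ _ _) (@centralizer_lin _ _ _)
    A_coordinates A_coordinates (F := fun j l => t2 (aa j) (aa l))) => [j l|].
    by apply: phiE.
  exact: t2_aa_free.
- move=> c; split=> [/C_decomposition [w [Aw ->]] | [t ->]].
    exists (\sum_j tau (aa j) (w j)); rewrite linear_sum.
    by apply: eq_bigr => j _; rewrite phiE.
  apply: (tensor_lift_centralizer tensorA) => a b Aa Ab.
  by rewrite phiE //; apply: C_t2.
move=> a1 a2 a3 a4 A1 A2 A3 A4; rewrite !phiE // ?(bc_mul level2) //.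
by apply: centralizerM A1 _; apply/A_incl_EM/centralizerM.
Qed.

Lemma C_eq_B_e1_B c : C c <-> exists (q : nat) (b b' : 'I_q -> M2),
   (forall j, B (b j) /\ B (b' j)) /\ c = \sum_(j < q) b j * e1 * b' j.
Proof.
split=> [/C_decomposition [w [Aw ->]] | [q [b [b' [Bbb ->]]]]].
  exists p, (fun j => lam *: A_to_Bl (aa j)), (fun j => A_to_Br (w j)); split.
    by move=> j; split; [apply/centralizerZ/A_to_Bl_B | apply: A_to_Br_B].
  apply: eq_bigr => j _ /=; rewrite -2!scalerAl (A_to_Bl_e1_Br (aaA j) (Aw j)).
  by rewrite scalerA mulfV // scale1r.
apply: centralizer_sum => j; case: (Bbb j); exact: C_B_e1_B.
Qed.

Lemma B_coordinatesl :
  coordinate_family B (fun j => A_to_Bl (aa j)) (fun j b => coeff j (B_to_Al b)).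
Proof.
apply: (coordinate_family_transport A_coordinates A_to_Bl_linear B_to_Al_linear).
- exact: A_to_Bl_B.
- exact: B_to_Al_A.
by move=> b Bb; rewrite A_to_BlK.
Qed.

Lemma B_coordinatesr :
  coordinate_family B (fun j => A_to_Br (aa j)) (fun j b => coeff j (B_to_Ar b)).
Proof.
apply: (coordinate_family_transport A_coordinates A_to_Br_linear B_to_Ar_linear).
- exact: A_to_Br_B.
- exact: B_to_Ar_A.
by move=> b Bb; rewrite A_to_BrK.
Qed.

Lemma C_iso_B_tensor_B (T : lmodType k) (tau : M2 -> M2 -> T) :
  is_tensor B (fun _ => False) tau ->
  exists phi : {linear T -> M2},
    [/\ injective phi, (forall c, C c <-> exists t, c = phi t) &
        forall b1 b2 b3 b4, B b1 -> B b2 -> B b3 -> B b4 ->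
          phi (tau b1 b2) * phi (tau b3 b4) = phi (tau (b1 * i2 (EM1 (b2 * b3))) b4)].
Proof.
move=> tensorB.
have [phi phiE] : exists phi : {linear T -> M2},
    forall b b', B b -> B b' -> phi (tau b b') = b * e1 * b'.
  apply: (tensor_lift tensorB) => // c b b' b'' _ _ _.
  by split; [rewrite !mulrDl -!scalerAl | rewrite mulrDr -scalerAr].
exists phi; split.
- apply: (tensor_lift_injective tensorB (@centralizer0 _ _ _) (@centralizer_lin _ _ _)
    B_coordinatesl B_coordinatesr (F := fun j l => lam^-1 *: t2 (aa j) (aa l)))
    => [j l|D D0 j l].
    by rewrite phiE ?A_to_Bl_e1_Br //; [apply: A_to_Bl_B | apply: A_to_Br_B].
  have /(_ j l) : forall j l, D j l * lam^-1 = 0.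
    apply: t2_aa_free; rewrite -[RHS]D0; apply: eq_bigr => i _.
    by apply: eq_bigr => m _; rewrite scalerA.
  by move/eqP; rewrite mulf_eq0 invr_eq0 (negbTE lam_neq0) orbF => /eqP.
- move=> c; split=> [/C_eq_B_e1_B [q [b [b' [Bbb ->]]]] | [t ->]].
    exists (\sum_j tau (b j) (b' j)); rewrite linear_sum.
    by apply: eq_bigr => j _; case: (Bbb j) => Bb Bb'; rewrite phiE.
  apply: (tensor_lift_centralizer tensorB) => b b' Bb Bb'.
  by rewrite phiE //; apply: C_B_e1_B.
move=> b1 b2 b3 b4 B1 B2 B3 B4; rewrite !phiE //; last first.
  by apply: centralizerM B1 _; apply/B_incl_EM1/centralizerM.
have -> : b1 * e1 * b2 * (b3 * e1 * b4) = b1 * (e1 * (b2 * b3) * e1) * b4 by rewrite !mulrA.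
by rewrite e1_B_e1 ?mulrA //; apply: centralizerM.
Qed.
End Tower.

Theorem proposition3p6 (k : fieldType) (M M1 M2 : algType k)
  (N : M -> Prop) (E : M -> M) (n : nat) (x y : 'I_n -> M) (lam : k)
  (t1 : M -> M -> M1) (EM : {linear M1 -> M})
  (t2 : M1 -> M1 -> M2) (EM1 : {linear M2 -> M1}) :
  (* N is a subalgebra of M *)
  is_subalgebra N ->
  (* E : M -> N is an N-bimodule map with E(1) = 1 *)
  (forall a b, E (a + b) = E a + E b) ->
  (forall m, N (E m)) ->
  (forall s m s', N s -> N s' -> E (s * m * s') = s * E m * s') ->
  E 1 = 1 ->
  (* quasi-basis, normalisation *)
  (forall m, \sum_(i < n) E (m * x i) * y i = m) ->
  (forall m, \sum_(i < n) x i * E (y i * m) = m) ->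
  lam != 0 -> \sum_(i < n) x i * y i = lam^-1%:A ->
  (* irreducibility C_M(N) = k1 *)
  (forall m, centralizer N m -> exists c : k, m = c%:A) ->
  (* first basic construction M1 = M (x)_N M *)
  is_tensor (fun _ => True) N t1 ->
  (forall a b c d, t1 a b * t1 c d = t1 (a * E (b * c)) d) ->
  1 = \sum_(i < n) t1 (x i) (y i) ->
  (forall a b, EM (t1 a b) = lam *: (a * b)) ->
  let i1 := fun m : M => \sum_(i < n) t1 (m * x i) (y i) in
  let r := fun i : 'I_n => lam^-1 *: t1 (x i) 1 in
  let s := fun i : 'I_n => t1 1 (y i) in
  (* second basic construction M2 = M1 (x)_M M1 *)
  is_tensor (fun _ => True) (fun z => exists m, z = i1 m) t2 ->
  (forall a b c d, t2 a b * t2 c d = t2 (a * i1 (EM (b * c))) d) ->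
  1 = \sum_(i < n) t2 (r i) (s i) ->
  (forall a b, EM1 (t2 a b) = lam *: (a * b)) ->
  let i2 := fun z : M1 => \sum_(i < n) t2 (z * r i) (s i) in
  let e1 := i2 (t1 1 1) in
  let e2 := t2 1 1 in
  let A := centralizer (fun z => exists2 m, N m & z = i1 m) in
  let B := centralizer (fun z => exists m, z = i2 (i1 m)) in
  let C := centralizer (fun z => exists2 m, N m & z = i2 (i1 m)) in
  (* depth 2 *)
  (exists (p : nat) (a : 'I_p -> M1), (forall j, A (a j)) /\
     (forall z, exists mm : 'I_p -> M, z = \sum_(j < p) a j * i1 (mm j)) /\
     (forall mm : 'I_p -> M, \sum_(j < p) a j * i1 (mm j) = 0 -> forall j, mm j = 0)) ->
  (exists (p : nat) (b : 'I_p -> M2), (forall j, B (b j)) /\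
     (forall z, exists mm : 'I_p -> M1, z = \sum_(j < p) b j * i2 (mm j)) /\
     (forall mm : 'I_p -> M1, \sum_(j < p) b j * i2 (mm j) = 0 -> forall j, mm j = 0)) ->
  [/\
   (* C = A e2 A *)
   (forall c, C c <-> exists (p : nat) (a a' : 'I_p -> M1),
      (forall j, A (a j) /\ A (a' j)) /\ c = \sum_(j < p) i2 (a j) * e2 * i2 (a' j)),
   (* C ~= A (x)_k A as rings *)
   (forall (T : lmodType k) (tau : M1 -> M1 -> T), is_tensor A (fun _ => False) tau ->
      exists phi : {linear T -> M2},
        [/\ injective phi, (forall c, C c <-> exists t, c = phi t) &
            forall a1 a2 a3 a4, A a1 -> A a2 -> A a3 -> A a4 ->
              phi (tau a1 a2) * phi (tau a3 a4) = phi (tau (a1 * i1 (EM (a2 * a3))) a4)]),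
   (* C = B e1 B *)
   (forall c, C c <-> exists (p : nat) (b b' : 'I_p -> M2),
      (forall j, B (b j) /\ B (b' j)) /\ c = \sum_(j < p) b j * e1 * b' j)
  & (* C ~= B (x)_k B as rings *)
   (forall (T : lmodType k) (tau : M2 -> M2 -> T), is_tensor B (fun _ => False) tau ->
      exists phi : {linear T -> M2},
        [/\ injective phi, (forall c, C c <-> exists t, c = phi t) &
            forall b1 b2 b3 b4, B b1 -> B b2 -> B b3 -> B b4 ->
              phi (tau b1 b2) * phi (tau b3 b4) = phi (tau (b1 * i2 (EM1 (b2 * b3))) b4)])].
Proof.
move=> _ _ E_range _ E1 basisl basisr lam_neq0 index irreducible tensor1 mul1 unit1 EM_t1
  i1 r s tensor2 mul2 unit2 EM1_t2 i2 e1 e2 A B C [p [aa [aaA [aa_span aa_free]]]] _.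
have level1 := BasicConstruction
  (NormalizedQuasiBasis E_range E1 basisl basisr lam_neq0 index) tensor1 mul1 unit1 EM_t1.
have level2 := BasicConstruction
  (basic_construction_quasi_basis level1) tensor2 mul2 unit2 EM1_t2.
split.
- exact: C_eq_A_e2_A level1 level2 aaA aa_span aa_free.
- exact: C_iso_A_tensor_A level1 level2 irreducible aaA aa_span aa_free.
- exact: C_eq_B_e1_B level1 level2 aaA aa_span aa_free.
- exact: C_iso_B_tensor_B level1 level2 irreducible aaA aa_span aa_free.
Qed.
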